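(* There exists an instance with three agents $N=\{1,2,3\}$, a finite set of items $A$, and additive valuations with externalities $V_i(j,a)$ for which no complete allocation is EFX.
   Context: Setting: agents $N$, finite item set $A$. An allocation $\pi=(\pi_1,\dots,\pi_n)$ consists of pairwise disjoint bundles $\pi_i\subseteq A$; it is complete if the union is $A$. $\pi(a)$ is the agent receiving item $a$. $V_i(j,a)\in\mathbb{R}$ is the value agent $i$ gets when item $a$ is given to agent $j$, and $V_i(\pi)=\sum_{a\text{ assigned in }\pi}V_i(\pi(a),a)$. $\pi^{i\leftrightarrow j}$ denotes $\pi$ with the bundles of $i$ and $j$ swapped. Agent $i$ envies $j$ if $V_i(\pi^{i\leftrightarrow j})>V_i(\pi)$. An allocation $\pi$ is EFX if for all $i,j$ such that $i$ envies $j$, for every item $a\in A$, with $\lambda$ defined by $\lambda_\ell=\pi_\ell\setminus\{a\}$ for all $\ell$: whenever $V_i(\lambda)-V_i(\lambda^{i\leftrightarrow j})>V_i(\pi)-V_i(\pi^{i\leftrightarrow j})$, we have $V_i(\lambda)\ge V_i(\lambda^{i\leftrightarrow j})$. *)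

From HB Require Import structures.
From mathcomp Require Import all_boot all_order all_algebra.
From mathcomp Require Import reals.
Set Implicit Arguments. Unset Strict Implicit. Unset Printing Implicit Defensive.
Import Order.TTheory GRing.Theory Num.Theory.
Local Open Scope ring_scope.

(* An allocation of items A to agents 'I_n: each item is given to at most one
   agent (Some j) or unassigned (None).  Bundles pi_j = [set a | pi a == Some j]
   are thus pairwise disjoint by construction. *)
Definition alloc (n : nat) (A : finType) := A -> option 'I_n.

Definition bundle n (A : finType) (pi : alloc n A) (j : 'I_n) : {set A} :=
  [set a | pi a == Some j].

Definition complete n (A : finType) (pi : alloc n A) : Prop :=
  forall a, exists j, pi a = Some j.

(* V i j a : value for agent i when item a is given to agent j *)
Definition value (R : realType) n (A : finType) (V : 'I_n -> 'I_n -> A -> R)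
  (i : 'I_n) (pi : alloc n A) : R :=
  \sum_(a : A) match pi a with Some j => V i j a | None => 0 end.

Definition swap_agent n (i j k : 'I_n) : 'I_n :=
  if k == i then j else if k == j then i else k.
Definition swap n (A : finType) (pi : alloc n A) (i j : 'I_n) : alloc n A :=
  fun a => omap (swap_agent i j) (pi a).

Definition remove n (A : finType) (pi : alloc n A) (a : A) : alloc n A :=
  fun b => if b == a then None else pi b.

Definition envies (R : realType) n (A : finType) (V : 'I_n -> 'I_n -> A -> R)
  (pi : alloc n A) (i j : 'I_n) : Prop :=
  value V i (swap pi i j) > value V i pi.

Definition EFX (R : realType) n (A : finType) (V : 'I_n -> 'I_n -> A -> R)
  (pi : alloc n A) : Prop :=
  forall i j : 'I_n, envies V pi i j ->
  forall a : A,
    let lam := remove pi a in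
    value V i lam - value V i (swap lam i j) > value V i pi - value V i (swap pi i j) ->
    value V i lam >= value V i (swap lam i j).

From mathcomp Require Import all_boot all_order all_algebra reals.
From mathcomp Require Import boolp.
Import Order.TTheory GRing.Theory Num.Theory.
Set Implicit Arguments. Unset Strict Implicit. Unset Printing Implicit Defensive.
Local Open Scope ring_scope.

(* With integer valuations, EFX of an allocation is a decidable property: it
   fails exactly when some agent i, agent j and item a witness a violation,
   and every comparison involved is a comparison of integers.  Three agents
   and three items give only 27 complete allocations, and for the integer
   valuation [counter_valuation] below every one of them has such a witness,
   as a direct computation shows. *)

Section IntegerValuations.

Variables (n : nat) (A : finType) (W : 'I_n -> 'I_n -> A -> int).

Definition valuez (i : 'I_n) (pi : alloc n A) : int :=
  \sum_(a : A) match pi a with Some j => W i j a | None => 0 end.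

Definition efx_violation (pi : alloc n A) (i j : 'I_n) (a : A) : bool :=
  let lam := remove pi a in
  [&& valuez i pi < valuez i (swap pi i j),
      valuez i pi - valuez i (swap pi i j) < valuez i lam - valuez i (swap lam i j)
    & valuez i lam < valuez i (swap lam i j)].

Definition efxb (pi : alloc n A) : bool :=
  [forall i, forall j, forall a, ~~ efx_violation pi i j a].

Variable R : realType.

Lemma value_intr i pi :
  value (fun i j a => (W i j a)%:~R : R) i pi = (valuez i pi)%:~R.
Proof.
rewrite /value /valuez rmorph_sum; apply: eq_bigr => a _.
by case: (pi a).
Qed.

Lemma efxP pi : reflect (EFX (fun i j a => (W i j a)%:~R : R) pi) (efxb pi).
Proof.
rewrite /EFX /envies; apply: (iffP forallP) => [no_viol i j | efx i].
  rewrite !value_intr ltr_int => envy a /=.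
  rewrite !value_intr -!rmorphB ltr_int ler_int => gain.
  move: no_viol => /(_ i)/forallP/(_ j)/forallP/(_ a).
  by rewrite /efx_violation envy gain -leNgt.
apply/forallP => j; apply/forallP => a; apply/and3P => -[envy gain lt_lam].
move: (efx i j); rewrite !value_intr ltr_int => /(_ envy a) /=.
by rewrite !value_intr -!rmorphB ltr_int ler_int leNgt lt_lam => /(_ gain).
Qed.

End IntegerValuations.

(* [enum 'I_3] does not reduce (its construction goes through the opaque
   [idP]), so computations enumerate the ordinals through this explicit list. *)
Definition ords3 : seq 'I_3 :=
  [:: @Ordinal 3 0 isT; @Ordinal 3 1 isT; @Ordinal 3 2 isT].

Lemma enum_ord3 : Finite.enum 'I_3 = ords3.
Proof. by rewrite -enumT; apply: (inj_map val_inj); rewrite val_enum_ord. Qed.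

Definition alloc3 (x0 x1 x2 : 'I_3) : alloc 3 'I_3 :=
  fun a => Some (nth x0 [:: x0; x1; x2] a).

Lemma complete_alloc3 (pi : alloc 3 'I_3) :
  complete pi -> exists x0 x1 x2, pi = alloc3 x0 x1 x2.
Proof.
move=> pi_full; have piE a : pi a = Some (odflt ord0 (pi a)).
  by case: (pi_full a) => j ->.
exists (odflt ord0 (pi ord0)), (odflt ord0 (pi (inord 1))),
  (odflt ord0 (pi ord_max)).
apply: funext => -[[|[|[|k]]] lt_k3] //;
  by rewrite piE; congr (Some (odflt _ (pi _))); apply: val_inj; rewrite /= ?inordK.
Qed.

Definition ext_table : seq (seq (seq int)) :=
  [:: [:: [:: 0; 0; 0]; [:: -4; 2; 5]; [:: -1; -4; -2]];
      [:: [:: -4; 4; -1]; [:: 0; 0; 0]; [:: -3; -1; 5]];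
      [:: [:: -3; -4; 1]; [:: -3; -4; -1]; [:: 0; 0; 0]]].

Definition counter_valuation (i j a : 'I_3) : int :=
  nth 0 (nth [::] (nth [::] ext_table i) j) a.

Lemma counter_valuation_not_efx :
  [forall x0, forall x1, forall x2, ~~ efxb counter_valuation (alloc3 x0 x1 x2)].
Proof.
(* Unlocking [card], [bigop] and [index_enum] leaves a closed computation. *)
rewrite /efxb /efx_violation /valuez /FiniteQuant.quant0b /pred0b.
by rewrite card.unlock /enum_mem bigop.unlock [index_enum _]unlock enum_ord3; vm_compute.
Qed.

Theorem theorem2 (R : realType) :
  exists (A : finType) (V : 'I_3 -> 'I_3 -> A -> R),
    forall pi : alloc 3 A, complete pi -> ~ EFX V pi.
Proof.
exists 'I_3, (fun i j a => (counter_valuation i j a)%:~R).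
move=> pi /complete_alloc3 [x0 [x1 [x2 ->]]] /efxP; apply/negP.
by move: counter_valuation_not_efx => /forallP/(_ x0)/forallP/(_ x1)/forallP/(_ x2).
Qed.
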